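(* For every semistandard hook-valued tableau $T$, the tableau $P(T)$ (the first component of the uncrowding map $\mathcal U(T)=(P(T),Q(T))$) is a set-valued tableau, i.e. a hook-valued tableau with arm excess $0$.
   Context: French notation: row $1$ is the bottom row, rows are numbered upward, columns from left to right; cell $(r,c)$ lies in row $r$ and column $c$. A semistandard tableau of hook shape $U$ consists of a hook entry $x$, a leg $\ell_1<\dots<\ell_p$ above $x$ with $x<\ell_1$, and an arm $a_1\le\dots\le a_q$ to the right of $x$ with $x\le a_1$ ($p,q\ge0$, positive integers). A (semistandard) hook-valued tableau (HVT) of partition shape $\lambda$ is a filling of the cells of $\lambda$ by such hook tableaux such that $\max(A)\le\min(B)$ whenever the cell of $A$ is left of the cell of $B$ in the same row, and $\max(A)<\min(C)$ whenever the cell of $A$ is below the cell of $C$ in the same column. Write $\mathsf H_T(r,c),\mathsf L_T(r,c),\mathsf A_T(r,c)$ for hook entry, leg, arm of cell $(r,c)$. Arm excess = total number of arm entries; a set-valued tableau is an HVT of arm excess $0$. Uncrowding bumping $\mathcal V_b$: if arm excess of $T$ is $0$, $\mathcal V_b(T)=T$. Otherwise let $c$ be the largest index of a column containing a cell with nonempty arm; among such cells in column $c$ let $(r,c)$ be the one whose arm contains the largest value. Let $a$ be the largest arm entry of $(r,c)$, $\ell$ its largest leg entry, and $(a,\ell]\cap\mathsf L_T(r,c)$ the set of leg entries $x$ of $(r,c)$ with $a<x\le\ell$. In column $c+1$ find the smallest entry $\ge a$. If none exists, attach a new empty cell on top of column $c+1$, with row $\tilde r$, and let $k$ be empty; otherwise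 let $k$ be this entry and $(\tilde r,c+1)$ its cell. (a) If $\tilde r\ne r$: remove $a$ from the arm of $(r,c)$, put $a$ in the position of $k$ in $(\tilde r,c+1)$ (as hook entry if the cell is new), append $k$ (if nonempty) to the arm of $(\tilde r,c+1)$. (b) If $\tilde r=r$: move $(a,\ell]\cap\mathsf L_T(r,c)$ from the leg of $(r,c)$ into the leg of $(r,c+1)$, remove $a$ from the arm of $(r,c)$, replace the hook entry of $(r,c+1)$ by $a$, and append $k$ (if nonempty) to the arm of $(r,c+1)$. Uncrowding insertion: $\mathcal V(T)=\mathcal V_b^d(T)$ where $d\ge1$ is minimal such that $\mathsf{shape}(\mathcal V_b^d(T))\neq\mathsf{shape}(\mathcal V_b^{d-1}(T))$ or $\mathcal V_b^d(T)=\mathcal V_b^{d-1}(T)$. Uncrowding map: for $T\in\mathsf{HVT}(\lambda)$ with arm excess $\alpha$, set $P_0=T$ and $Q_0$ the empty tableau of shape $\lambda/\lambda$; for $1\le i\le\alpha$ let $P_i=\mathcal V(P_{i-1})$, let $c$ be the index of the rightmost column of $P_{i-1}$ containing a cell with nonzero arm excess and $\tilde c$ the column of the cell $\mathsf{shape}(P_i)/\mathsf{shape}(P_{i-1})$; $Q_i$ is $Q_{i-1}$ with this cell added and filled with $\tilde c-c$. Then $\mathcal U(T)=(P(T),Q(T)):=(P_\alpha,Q_\alpha)$. *)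

From HB Require Import structures.
From mathcomp Require Import all_boot all_order.
From mathcomp Require Import finmap.

Set Implicit Arguments.
Unset Strict Implicit.
Unset Printing Implicit Defensive.

Local Open Scope fset_scope.
Local Open Scope fmap_scope.

(* A cell content is (x, (leg, arm)) : hook entry x, the leg           *)
(* l_1 < ... < l_p (listed bottom to top) and the arm a_1 <= ... <= a_q *)
(* (listed left to right).                                             *)
Definition hcell := (nat * (seq nat * seq nat))%type.

Definition hookE (X : hcell) : nat := X.1.
Definition legE (X : hcell) : seq nat := X.2.1.
Definition armE (X : hcell) : seq nat := X.2.2.
Definition mkcell (x : nat) (l a : seq nat) : hcell := (x, (l, a)).

Definition entries (X : hcell) : seq nat := hookE X :: legE X ++ armE X.

Definition seqmax (s : seq nat) : nat := foldr maxn 0 s.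
Definition seqmin (s : seq nat) : nat :=
  match s with [::] => 0 | x :: s' => foldr minn x s' end.

Definition is_hook_tab (X : hcell) : bool :=
  [&& 0 < hookE X, sorted ltn (hookE X :: legE X) & sorted leq (hookE X :: armE X)].

(* Hook-valued tableaux: finite maps from cells (r, c) (row r,         *)
(* column c, both 1-indexed, French notation: row 1 at the bottom) to  *)
(* hook tableaux.                                                      *)
Definition tab := {fmap (nat * nat) -> hcell}.

Definition shape (T : tab) : {fset (nat * nat)} := domf T.
Definition keys (T : tab) : seq (nat * nat) := enum_fset (domf T).
Definition getc (T : tab) (k : nat * nat) : hcell :=
  odflt (mkcell 0 [::] [::]) T.[? k].

Definition is_partition_shape (S : {fset (nat * nat)}) : bool :=
  [forall k : S, [&& 0 < (val k).1, 0 < (val k).2,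
     ((val k).1 == 1) || (((val k).1.-1, (val k).2) \in S) &
     ((val k).2 == 1) || (((val k).1, (val k).2.-1) \in S)]].

Definition is_HVT (T : tab) : bool :=
  [&& is_partition_shape (shape T),
      all (fun k => is_hook_tab (getc T k)) (keys T),
      all (fun k => all (fun k' =>
         ((k.1 == k'.1) && (k.2 < k'.2)) ==>
           (seqmax (entries (getc T k)) <= seqmin (entries (getc T k'))))
         (keys T)) (keys T) &
      all (fun k => all (fun k' =>
         ((k.2 == k'.2) && (k.1 < k'.1)) ==>
           (seqmax (entries (getc T k)) < seqmin (entries (getc T k'))))
         (keys T)) (keys T)].

Definition arm_excess (T : tab) : nat :=
  \sum_(k <- keys T) size (armE (getc T k)).

Definition is_set_valued (T : tab) : bool := is_HVT T && (arm_excess T == 0).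

Definition armkeys (T : tab) : seq (nat * nat) :=
  [seq k <- keys T | armE (getc T k) != [::]].

Definition arm_col (T : tab) : nat := \max_(k <- armkeys T) k.2.

Definition argmax {K : Type} (f : K -> nat) (s : seq K) : option K :=
  foldr (fun k acc => match acc with
                      | None => Some k
                      | Some k' => if f k' < f k then Some k else Some k'
                      end) None s.

Definition place_and_bump (Y : hcell) (k a : nat) : hcell :=
  let Y' :=
    if hookE Y == k then mkcell a (legE Y) (armE Y)
    else if k \in legE Y then mkcell (hookE Y) (sort leq (a :: rem k (legE Y))) (armE Y)
    else mkcell (hookE Y) (legE Y) (sort leq (a :: rem k (armE Y))) in
  mkcell (hookE Y') (legE Y') (sort leq (k :: armE Y')).

Definition Vb (T : tab) : tab :=
  let c0 := arm_col T in
  match argmax (fun k => seqmax (armE (getc T k)))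
               [seq k <- armkeys T | k.2 == c0] with
  | None => T   (* arm excess 0 *)
  | Some (r, c) =>
    let X := getc T (r, c) in
    let a := seqmax (armE X) in
    let l := seqmax (legE X) in
    let moved := [seq x <- legE X | (a < x) && (x <= l)] in
    let col := [seq k <- keys T | k.2 == c.+1] in
    let bigger :=
      [seq x <- flatten [seq entries (getc T k) | k <- col] | a <= x] in
    (* kopt = the smallest entry >= a in column c+1 (if any), rt = its row,
       or the row of a new cell on top of column c+1 *)
    let kopt := if bigger is [::] then None else Some (seqmin bigger) in
    let rt := match kopt with
              | None => (\max_(k <- col) k.1).+1
              | Some kk =>
                  match [seq k <- col | kk \in entries (getc T k)] with
                  | k0 :: _ => k0.1
                  | [::] => 0
                  end
              end in
    let Y := getc T (rt, c.+1) in
    if rt != r then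
      let Y' := match kopt with
                | None => mkcell a [::] [::]
                | Some kk => place_and_bump Y kk a
                end in
      T.[(r, c) <- mkcell (hookE X) (legE X) (rem a (armE X))]
       .[(rt, c.+1) <- Y']
    else
      let Yl := if kopt is None then [::] else legE Y in
      let Ya := if kopt is None then [::] else armE Y in
      let Y' := mkcell a (sort leq (Yl ++ moved))
                  (match kopt with None => Ya | Some kk => sort leq (kk :: Ya) end) in
      T.[(r, c) <- mkcell (hookE X) [seq x <- legE X | ~~ ((a < x) && (x <= l))]
                              (rem a (armE X))]
       .[(r, c.+1) <- Y']
  end.

(* Uncrowding insertion V(T) = V_b^d(T), d >= 1 minimal such that the  *)
(* shape changes or V_b^d(T) = V_b^(d-1)(T).  Stated as a relation     *)
(* (V T U means U = V(T)); it is functional since V_b is a function.   *)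
Definition V_stop (T : tab) (d : nat) : bool :=
  (shape (iter d Vb T) != shape (iter d.-1 Vb T)) || (iter d Vb T == iter d.-1 Vb T).

Definition V_rel (T U : tab) : Prop :=
  exists d, [/\ 0 < d, V_stop T d,
               (forall d', 0 < d' < d -> ~~ V_stop T d') & U = iter d Vb T].

(* P(T): P_0 = T, P_i = V(P_(i-1)) for 1 <= i <= alpha = arm_excess T,
   P(T) = P_alpha.  (The recording tableau Q is irrelevant here.) *)
Definition uncrowd_P (T P : tab) : Prop :=
  exists s : seq tab,
    [/\ size s = (arm_excess T).+1,
        nth T s 0 = T,
        (forall i, 0 < i <= arm_excess T -> V_rel (nth T s i.-1) (nth T s i)) &
        P = nth T s (arm_excess T)].

(* A bumping step moves the largest arm entry [a] of a cell (r, c) in the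
   rightmost column containing a nonempty arm into column c+1, and the result is
   again a hook-valued tableau. Either [a] lands in an existing cell of column
   c+1, whose arm absorbs the displaced entry, so shape and arm excess are
   unchanged while the rightmost column with a nonempty arm moves strictly to the
   right; or [a] starts a new cell on top of column c+1 and the arm excess drops
   by one. The first alternative can only happen finitely often on a fixed shape,
   so each uncrowding insertion terminates, preserves hook-valuedness and lowers
   the arm excess by exactly one; after [arm_excess T] insertions no arm entry is
   left. *)

From Pilot Require Import Defs.
From mathcomp Require Import all_boot finmap zify.

Set Implicit Arguments.
Unset Strict Implicit.
Unset Printing Implicit Defensive.

Local Open Scope fmap_scope.

Lemma seqmax_leq s B : (seqmax s <= B) = all (fun x => x <= B) s.
Proof. by elim: s => //= x s IH; rewrite geq_max IH. Qed.

Lemma leq_seqmax s x : x \in s -> x <= seqmax s.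
Proof. by move=> xs; have := leqnn (seqmax s); rewrite seqmax_leq => /allP; apply. Qed.

Lemma seqmax_mem s : s != [::] -> seqmax s \in s.
Proof.
elim: s => // x [|y s] IH _; first by rewrite /= maxn0 mem_head.
rewrite inE /=; case: leqP => _; last by rewrite eqxx.
by rewrite IH ?orbT.
Qed.

Lemma leq_seqmin B x s : (B <= seqmin (x :: s)) = all (leq B) (x :: s).
Proof. by rewrite /=; elim: s => /= [|y s IH]; rewrite ?andbT // leq_min IH andbCA. Qed.

Lemma seqmin_leq x s y : y \in x :: s -> seqmin (x :: s) <= y.
Proof. by move=> ys; have := leqnn (seqmin (x :: s)); rewrite leq_seqmin => /allP; apply. Qed.

Lemma seqmin_mem x s : seqmin (x :: s) \in x :: s.
Proof.
elim: s => [|y s IH] /=; first by rewrite mem_head.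
rewrite !inE; case: leqP => _; first by rewrite eqxx orbT.
by move: IH; rewrite !inE => /orP[] ->; rewrite ?orbT.
Qed.

Lemma hookE_mkcell x L A : hookE (mkcell x L A) = x. Proof. by []. Qed.
Lemma legE_mkcell x L A : legE (mkcell x L A) = L. Proof. by []. Qed.
Lemma armE_mkcell x L A : armE (mkcell x L A) = A. Proof. by []. Qed.
Definition mkcellE := (hookE_mkcell, legE_mkcell, armE_mkcell).

Definition max_entry (X : hcell) : nat := seqmax (entries X).
Definition min_entry (X : hcell) : nat := seqmin (entries X).

Lemma mem_entries X y :
  (y \in entries X) = [|| y == hookE X, y \in legE X | y \in armE X].
Proof. by rewrite inE mem_cat. Qed.

Lemma hook_entry X : hookE X \in entries X.
Proof. exact: mem_head. Qed.

Lemma leq_max_entry X y : y \in entries X -> y <= max_entry X.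
Proof. exact: leq_seqmax. Qed.

Lemma max_entry_mem X : max_entry X \in entries X.
Proof. exact: seqmax_mem. Qed.

Lemma max_entry_leqP X B :
  reflect (forall y, y \in entries X -> y <= B) (max_entry X <= B).
Proof. by rewrite /max_entry seqmax_leq; apply: allP. Qed.

Lemma min_entry_leq X y : y \in entries X -> min_entry X <= y.
Proof. exact: seqmin_leq. Qed.

Lemma min_entry_leq_max X : min_entry X <= max_entry X.
Proof. exact/min_entry_leq/seqmax_mem. Qed.

Lemma is_hook_tabE X : is_hook_tab X =
  [&& 0 < hookE X, all (ltn (hookE X)) (legE X), sorted ltn (legE X),
      all (leq (hookE X)) (armE X) & sorted leq (armE X)].
Proof.
by rewrite /is_hook_tab /= (path_sortedE ltn_trans) (path_sortedE leq_trans) !andbA.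
Qed.

Lemma min_entry_hook X : is_hook_tab X -> min_entry X = hookE X.
Proof.
rewrite is_hook_tabE => /and5P[_ /allP hL _ /allP hA _]; apply/eqP.
rewrite eqn_leq min_entry_leq ?hook_entry //= leq_seqmin /= leqnn /= all_cat.
by apply/andP; split; apply/allP => y yX; [apply/ltnW/hL | apply: hA].
Qed.

Lemma hook_leq_entry X y : is_hook_tab X -> y \in entries X -> hookE X <= y.
Proof. by move=> hX; rewrite -(min_entry_hook hX); apply: min_entry_leq. Qed.

Definition young_closed (S : {fset (nat * nat)}) : Prop :=
  forall k, k \in S -> [&& 0 < k.1, 0 < k.2,
    (k.1 == 1) || ((k.1.-1, k.2) \in S) & (k.2 == 1) || ((k.1, k.2.-1) \in S)].

Lemma is_partition_shapeP S : reflect (young_closed S) (is_partition_shape S).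
Proof.
apply: (iffP forallP) => [h k kS | h k]; first exact: (h [` kS]%fset).
exact: h (fsvalP k).
Qed.

Section YoungClosed.
Variable S : {fset (nat * nat)}.
Hypothesis youngS : young_closed S.

Lemma young_pos k : k \in S -> 0 < k.1 /\ 0 < k.2.
Proof. by move/youngS => /and4P[]. Qed.

Lemma young_below r r' c : (r, c) \in S -> 0 < r' <= r -> (r', c) \in S.
Proof.
elim: r => [|r IH] rcS /andP[r'0 r'r]; first by rewrite leqn0 in r'r; rewrite (eqP r'r) in r'0.
case: (ltngtP r' r.+1) r'r => // [r'r|->] _ //.
apply: IH; last by rewrite r'0.
have /and4P[_ _ /orP[/eqP /succn_inj r0 | //] _] := youngS rcS.
by rewrite r0 ltnS leqn0 in r'r; rewrite (eqP r'r) in r'0.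
Qed.

Lemma young_left r c c' : (r, c) \in S -> 0 < c' <= c -> (r, c') \in S.
Proof.
elim: c => [|c IH] rcS /andP[c'0 c'c]; first by rewrite leqn0 in c'c; rewrite (eqP c'c) in c'0.
case: (ltngtP c' c.+1) c'c => // [c'c|->] _ //.
apply: IH; last by rewrite c'0.
have /and4P[_ _ _ /orP[/eqP /succn_inj c0 | //]] := youngS rcS.
by rewrite c0 ltnS leqn0 in c'c; rewrite (eqP c'c) in c'0.
Qed.

Lemma young_fset1U q : 0 < q.1 -> 0 < q.2 ->
  (q.1 == 1) || ((q.1.-1, q.2) \in S) -> (q.2 == 1) || ((q.1, q.2.-1) \in S) ->
  young_closed (q |` S)%fset.
Proof.
move=> q1 q2 qbelow qleft k; rewrite !in_fset1U => /orP[/eqP-> | /youngS].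
  by rewrite q1 q2; case/orP: qbelow => ->; case/orP: qleft => ->; rewrite ?orbT.
by case/and4P=> -> -> kbelow kleft; case/orP: kbelow => ->; case/orP: kleft => ->;
  rewrite ?orbT.
Qed.

End YoungClosed.

Lemma getc_set (T : tab) k0 v k :
  getc T.[k0 <- v] k = if k == k0 then v else getc T k.
Proof. by rewrite /getc fnd_set; case: eqP. Qed.

Definition hook_cells (T : tab) : Prop :=
  forall k, k \in domf T -> is_hook_tab (getc T k).

Definition rows_weak (T : tab) : Prop :=
  forall k k', k \in domf T -> k' \in domf T -> k.1 = k'.1 -> k.2 < k'.2 ->
    max_entry (getc T k) <= min_entry (getc T k').

Definition cols_strict (T : tab) : Prop :=
  forall k k', k \in domf T -> k' \in domf T -> k.2 = k'.2 -> k.1 < k'.1 ->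
    max_entry (getc T k) < min_entry (getc T k').

Lemma is_HVTP T : reflect
  [/\ young_closed (domf T), hook_cells T, rows_weak T & cols_strict T] (is_HVT T).
Proof.
apply: (iffP and4P) => [[/is_partition_shapeP Y /allP H R C] | [Y H R C]].
  split=> // k k' kT k'T e lt.
    by have := allP (allP R k kT) k' k'T; rewrite e eqxx lt.
  by have := allP (allP C k kT) k' k'T; rewrite e eqxx lt.
split; [exact/is_partition_shapeP | exact/allP | |];
  apply/allP => k kT; apply/allP => k' k'T; apply/implyP => /andP[/eqP e lt].
  exact: R.
exact: C.
Qed.

Lemma HVT_leq_northeast T p q : is_HVT T -> p \in domf T -> q \in domf T ->
  p != q -> p.1 <= q.1 -> p.2 <= q.2 ->
  max_entry (getc T p) <= min_entry (getc T q).
Proof.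
case/is_HVTP => Y _ R C; case: p q => r c [r' c'] pT qT /= pq rr' cc'.
case: (ltngtP r r') rr' => // [rlt | er] _; last first.
  rewrite -er in qT pq *; apply: R => //=; rewrite ltn_neqAle cc' andbT.
  by move: pq; apply: contra_neq => ->.
case: (ltngtP c c') cc' => // [clt | ec] _; last first.
  by rewrite -ec in qT *; exact: ltnW (C _ _ pT qT erefl rlt).
have rc'T : (r, c') \in domf T.
  by apply: (young_below Y qT); rewrite (young_pos Y pT).1 ltnW.
apply: leq_trans (R _ _ pT rc'T erefl clt) _.
exact/ltnW/(leq_ltn_trans (min_entry_leq_max _))/(C _ _ rc'T qT erefl rlt).
Qed.

Lemma HVT_set T q Y : is_HVT T -> is_hook_tab Y -> young_closed (q |` domf T)%fset ->
  (forall k, k \in domf T -> k.1 = q.1 -> k.2 < q.2 ->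
     max_entry (getc T k) <= min_entry Y) ->
  (forall k, k \in domf T -> k.1 = q.1 -> q.2 < k.2 ->
     max_entry Y <= min_entry (getc T k)) ->
  (forall k, k \in domf T -> k.2 = q.2 -> k.1 < q.1 ->
     max_entry (getc T k) < min_entry Y) ->
  (forall k, k \in domf T -> k.2 = q.2 -> q.1 < k.1 ->
     max_entry Y < min_entry (getc T k)) ->
  is_HVT T.[q <- Y].
Proof.
case/is_HVTP=> _ H R C hY Yq left right below above.
have memE k : (k \in domf T.[q <- Y]) = (k == q) || (k \in domf T).
  by rewrite dom_setf in_fset1U.
apply/is_HVTP; split; first by rewrite dom_setf.
- by move=> k; rewrite memE getc_set; case: eqP => // _; apply: H.
- move=> k k'; rewrite !memE !getc_set.
  case: (eqVneq k q) => [->|_]; case: (eqVneq k' q) => [->|_] //=.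
  + by move=> _ _ _; rewrite ltnn.
  + by move=> _ k'T /esym; apply: right.
  + by move=> kT _; apply: left.
  + exact: R.
- move=> k k'; rewrite !memE !getc_set.
  case: (eqVneq k q) => [->|_]; case: (eqVneq k' q) => [->|_] //=.
  + by move=> _ _ _; rewrite ltnn.
  + by move=> _ k'T /esym; apply: above.
  + by move=> kT _; apply: below.
  + exact: C.
Qed.

Lemma HVT_set_within T p X : is_HVT T -> p \in domf T -> is_hook_tab X ->
  min_entry (getc T p) <= min_entry X -> max_entry X <= max_entry (getc T p) ->
  is_HVT T.[p <- X].
Proof.
move=> hT pT hX minX maxX; have /is_HVTP[Y _ R C] := hT.
apply: HVT_set; rewrite ?mem_fset1U // => k kT e lt.
- exact: leq_trans (R _ _ kT pT e lt) minX.
- exact: leq_trans maxX (R _ _ pT kT (esym e) lt).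
- exact: leq_trans (C _ _ kT pT e lt) minX.
- exact: leq_ltn_trans maxX (C _ _ pT kT (esym e) lt).
Qed.

Lemma HVT_set2 T p X q Y : is_HVT T -> p \in domf T -> p.2 < q.2 ->
  is_hook_tab X -> min_entry (getc T p) <= min_entry X ->
  max_entry X <= max_entry (getc T p) ->
  is_hook_tab Y -> young_closed (q |` domf T)%fset ->
  (forall k, k \in domf T -> k != p -> k.1 = q.1 -> k.2 < q.2 ->
     max_entry (getc T k) <= min_entry Y) ->
  (forall k, k \in domf T -> k.1 = q.1 -> q.2 < k.2 ->
     max_entry Y <= min_entry (getc T k)) ->
  (forall k, k \in domf T -> k.2 = q.2 -> k.1 < q.1 ->
     max_entry (getc T k) < min_entry Y) ->
  (forall k, k \in domf T -> k.2 = q.2 -> q.1 < k.1 ->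
     max_entry Y < min_entry (getc T k)) ->
  (p.1 = q.1 -> max_entry X <= min_entry Y) ->
  is_HVT T.[p <- X].[q <- Y].
Proof.
move=> hT pT pq hX minX maxX hY Yq left right below above pY.
have domE : domf T.[p <- X] = domf T by rewrite dom_setf mem_fset1U.
apply: HVT_set; rewrite ?domE ?HVT_set_within // => k kT.
- by rewrite getc_set; case: eqVneq => [-> /pY|]; last exact: left.
- rewrite getc_set; case: eqVneq => [-> _ /(ltn_trans pq)|_]; last exact: right.
  by rewrite ltnn.
- by rewrite getc_set; case: eqVneq => [-> e|_]; [rewrite e ltnn in pq | apply: below].
- by rewrite getc_set; case: eqVneq => [-> e|_]; [rewrite e ltnn in pq | apply: above].
Qed.

(* Also for [k \notin domf T], whose default cell [getc T k] has an empty arm. *)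
Lemma arm_excess_set T k v :
  arm_excess T.[k <- v] + size (armE (getc T k)) = arm_excess T + size (armE v).
Proof.
rewrite /arm_excess /keys dom_setf.
case: (boolP (k \in domf T)) => kT.
  have others : \sum_(i <- (domf T `\ k)%fset) size (armE (getc T.[k <- v] i)) =
                \sum_(i <- (domf T `\ k)%fset) size (armE (getc T i)).
    by apply: eq_fbigr => i; rewrite in_fsetD1 getc_set => /andP[/negPf-> _].
  rewrite mem_fset1U // !(big_fsetD1 k kT) /= others getc_set eqxx.
  by rewrite addnAC [RHS]addnC addnA.
have -> : getc T k = mkcell 0 [::] [::] by rewrite /getc not_fnd.
rewrite (big_fsetU1 _ _ kT) /= getc_set eqxx addn0 addnC; congr (_ + _).
apply: eq_fbigr => i iT _; rewrite getc_set; case: eqP => // ik.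
by rewrite -ik iT in kT.
Qed.

Lemma sorted_ltn_sort s : uniq s -> sorted ltn (sort leq s).
Proof.
by move=> us; rewrite ltn_sorted_uniq_leq sort_uniq us sort_sorted //; apply: leq_total.
Qed.

Lemma hook_tab_push_arm Z k : is_hook_tab Z -> hookE Z <= k ->
  is_hook_tab (mkcell (hookE Z) (legE Z) (sort leq (k :: armE Z))).
Proof.
rewrite !is_hook_tabE !mkcellE => /and5P[-> -> -> /allP hA _] hk /=.
rewrite sort_sorted ?andbT; last exact: leq_total.
by apply/allP => y; rewrite mem_sort inE => /orP[/eqP-> | /hA].
Qed.

Definition place_entry (Y : hcell) (k a : nat) : hcell :=
  if hookE Y == k then mkcell a (legE Y) (armE Y)
  else if k \in legE Y then mkcell (hookE Y) (sort leq (a :: rem k (legE Y))) (armE Y)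
  else mkcell (hookE Y) (legE Y) (sort leq (a :: rem k (armE Y))).

Lemma place_and_bumpE Y k a : place_and_bump Y k a =
  mkcell (hookE (place_entry Y k a)) (legE (place_entry Y k a))
         (sort leq (k :: armE (place_entry Y k a))).
Proof. by []. Qed.

Section PlaceEntry.
Variables (Y : hcell) (k a : nat).
Hypotheses (hY : is_hook_tab Y) (kY : k \in entries Y) (a0 : 0 < a) (ak : a <= k).
Hypothesis kmin : forall y, y \in entries Y -> a <= y -> k <= y.

Lemma place_entry_spec :
  [/\ is_hook_tab (place_entry Y k a),
      hookE (place_entry Y k a) = (if hookE Y == k then a else hookE Y),
      {subset entries (place_entry Y k a) <= a :: entries Y} &
      size (armE (place_entry Y k a)) = size (armE Y)].
Proof.
have ha : hookE Y != k -> hookE Y < a.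
  move=> hnk; rewrite ltnNge; apply: contra hnk => ah.
  by rewrite eqn_leq (hook_leq_entry hY kY) kmin ?hook_entry.
move: (hY); rewrite is_hook_tabE => /and5P[h0 /allP hL sL /allP hA sA].
have uL : uniq (legE Y) by apply: sorted_uniq sL; [apply: ltn_trans | apply: ltnn].
rewrite /place_entry; case: (eqVneq (hookE Y) k) => [hkE | /ha hlt]; last case: ifP => kL.
- split => //; last by move=> y; rewrite mem_entries inE mem_entries !mkcellE; case/or3P => ->; rewrite ?orbT.
  rewrite is_hook_tabE !mkcellE a0 sL sA andbT /=; apply/andP; split; apply/allP => y.
    by move/hL; apply: leq_ltn_trans; rewrite hkE.
  by move/hA; apply: leq_trans; rewrite hkE.
- split => //; last first.
    move=> y; rewrite mem_entries inE mem_entries !mkcellE mem_sort inE.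
    by case/or3P => [-> | /orP[-> | /mem_rem ->] | ->]; rewrite ?orbT.
  rewrite is_hook_tabE !mkcellE h0 sA andbT /=; apply/and3P; split.
  + by apply/allP => y; rewrite mem_sort inE => /orP[/eqP-> // | /mem_rem /hL].
  + apply: sorted_ltn_sort; rewrite /= rem_uniq // andbT (mem_rem_uniq _ uL) inE negb_and.
    rewrite negbK; case: (boolP (a \in legE Y)) => aL; rewrite ?orbT //.
    by rewrite eqn_leq ak kmin // mem_entries aL orbT.
  + exact/allP.
- have kA : k \in armE Y by move: kY; rewrite mem_entries kL (gtn_eqF (leq_trans hlt ak)).
  split => //.
  + rewrite is_hook_tabE !mkcellE h0 sL sort_sorted ?andbT /=; last exact: leq_total.
    apply/andP; split; first exact/allP.
    by apply/allP => y; rewrite mem_sort inE => /orP[/eqP-> | /mem_rem /hA]; first exact: ltnW.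
  + move=> y; rewrite mem_entries inE mem_entries !mkcellE mem_sort inE.
    by case/or3P => [-> | -> | /orP[-> | /mem_rem ->]]; rewrite ?orbT.
  + rewrite !mkcellE size_sort /= size_rem // prednK // lt0n size_eq0.
    by apply: contraTneq kA => ->.
Qed.

Lemma place_and_bump_spec :
  [/\ is_hook_tab (place_and_bump Y k a),
      hookE (place_and_bump Y k a) = (if hookE Y == k then a else hookE Y),
      max_entry (place_and_bump Y k a) <= max_entry Y &
      size (armE (place_and_bump Y k a)) = (size (armE Y)).+1].
Proof.
have [hW hookW subW armW] := place_entry_spec.
rewrite place_and_bumpE; split.
- by apply: hook_tab_push_arm; rewrite // hookW; case: ifP => // _; apply: (hook_leq_entry hY kY).
- by rewrite hookE_mkcell hookW.
- apply/max_entry_leqP => y yZ; have kmax := leq_max_entry kY.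
  have : (y == k) || (y \in entries (place_entry Y k a)).
    by move: yZ; rewrite !mem_entries !mkcellE mem_sort inE; case/or4P => ->; rewrite ?orbT.
  case/orP => [/eqP-> // | /subW]; rewrite inE => /orP[/eqP-> | /leq_max_entry //].
  exact: leq_trans ak kmax.
- by rewrite armE_mkcell size_sort /= armW.
Qed.

End PlaceEntry.
Definition col_keys (T : tab) (c : nat) : seq (nat * nat) := [seq k <- keys T | k.2 == c].

Lemma mem_col_keys T c k : (k \in col_keys T c) = (k \in domf T) && (k.2 == c).
Proof. by rewrite mem_filter andbC. Qed.

Definition col_entries_geq (T : tab) (c a : nat) : seq nat :=
  [seq x <- flatten [seq entries (getc T k) | k <- col_keys T c] | a <= x].

Lemma mem_col_entries_geq T c a y : reflect
  (a <= y /\ exists2 k, k \in col_keys T c & y \in entries (getc T k))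
  (y \in col_entries_geq T c a).
Proof. by rewrite mem_filter; apply: (iffP andP) => -[-> /flatten_mapP]. Qed.

Definition col_entries_lt (T : tab) (c a : nat) : Prop :=
  forall k y, k \in domf T -> k.2 = c -> y \in entries (getc T k) -> y < a.

Definition col_entries_geq_lb (T : tab) (c a kk : nat) : Prop :=
  forall k y, k \in domf T -> k.2 = c -> y \in entries (getc T k) -> a <= y -> kk <= y.

Lemma col_entries_geq_nil T c a :
  col_entries_geq T c a = [::] -> col_entries_lt T c a.
Proof.
move=> E k y kT kc yk; rewrite ltnNge; apply/negP => ay.
suff : y \in col_entries_geq T c a by rewrite E.
by apply/mem_col_entries_geq; split; last by exists k; rewrite // mem_col_keys kT kc eqxx.
Qed.

Lemma seqmin_col_entries_geq T c a b bs : col_entries_geq T c a = b :: bs ->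
  let kk := seqmin (b :: bs) in
  [/\ a <= kk, col_entries_geq_lb T c a kk &
      exists2 k, k \in col_keys T c & kk \in entries (getc T k)].
Proof.
move=> E kk; have /mem_col_entries_geq[akk kkcol] : kk \in col_entries_geq T c a.
  by rewrite E seqmin_mem.
split=> // k y kT kc yk ay; apply: seqmin_leq; rewrite -E.
by apply/mem_col_entries_geq; split; last by exists k; rewrite // mem_col_keys kT kc eqxx.
Qed.

Lemma bigmax_seq_mem (I : eqType) (s : seq I) (F : I -> nat) :
  s != [::] -> \max_(i <- s) F i \in map F s.
Proof.
elim: s => // x [_ _ | y s IH _]; first by rewrite big_seq1 mem_head.
have -> : \max_(i <- [:: x, y & s]) F i = maxn (F x) (\max_(i <- y :: s) F i).
  by rewrite big_cons.
rewrite map_cons inE; case: (leqP (F x) (\max_(i <- y :: s) F i)) => h.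
  by rewrite IH ?orbT.
by rewrite eqxx.
Qed.

Definition first_free_row (T : tab) (c rt : nat) : Prop :=
  [/\ 0 < rt, (rt == 1) || ((rt.-1, c) \in domf T) &
      forall k, k \in domf T -> k.2 = c -> k.1 < rt].

Lemma first_free_row_max T c : first_free_row T c (\max_(k <- col_keys T c) k.1).+1.
Proof.
split=> //= [|k kT kc]; last first.
  by rewrite ltnS (@leq_bigmax_seq _ _ xpredT (fun k => k.1)) // mem_col_keys kT kc eqxx.
case: (eqVneq (col_keys T c) [::]) => [-> | /(bigmax_seq_mem (fun k => k.1))].
  by rewrite big_nil.
case/mapP => -[r c'] + /= m_eq; rewrite mem_col_keys /= => /andP[kT /eqP c'c].
by rewrite m_eq -c'c kT orbT.
Qed.

(* [c < arm_col T'] is the progress measure of the uncrowding insertion. *)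
Definition bump_step (T T' : tab) (c : nat) : Prop :=
  is_HVT T' /\
  ([/\ domf T' = domf T, arm_excess T' = arm_excess T & c < arm_col T']
   \/ domf T' != domf T /\ arm_excess T' = (arm_excess T).-1).

Lemma leq_arm_col T k : k \in domf T -> armE (getc T k) != [::] -> k.2 <= arm_col T.
Proof.
move=> kT kA; apply: (@leq_bigmax_seq _ _ xpredT (fun k => k.2)) => //.
by rewrite mem_filter kA.
Qed.

Section Bump.
Variables (T : tab) (r c : nat).
Hypotheses (hT : is_HVT T) (pT : (r, c) \in domf T)
           (armX : armE (getc T (r, c)) != [::]).

Local Notation X := (getc T (r, c)).
Local Notation a := (seqmax (armE X)).
(* [moved] is (a, l] \cap L(r, c); [Xa] and [Xb] are the cell (r, c) after
   cases (a) and (b) of the bumping. *)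
Local Notation moved := [seq x <- legE X | (a < x) && (x <= seqmax (legE X))].
Local Notation Xa := (mkcell (hookE X) (legE X) (rem a (armE X))).
Local Notation Xb := (mkcell (hookE X)
  [seq x <- legE X | ~~ ((a < x) && (x <= seqmax (legE X)))] (rem a (armE X))).

Let youngT : young_closed (domf T). Proof. by case/is_HVTP: hT. Qed.
Let hookT : hook_cells T. Proof. by case/is_HVTP: hT. Qed.
Let rowsT : rows_weak T. Proof. by case/is_HVTP: hT. Qed.
Let colsT : cols_strict T. Proof. by case/is_HVTP: hT. Qed.

Let hookX : is_hook_tab X. Proof. exact: hookT. Qed.

Let a_arm : a \in armE X. Proof. exact: seqmax_mem. Qed.

Let hook_leq_a : hookE X <= a.
Proof. by move: hookX; rewrite is_hook_tabE => /and5P[_ _ _ /allP/(_ a a_arm)]. Qed.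

Let a_pos : 0 < a.
Proof. by move: hookX; rewrite is_hook_tabE => /andP[/leq_trans/(_ hook_leq_a)]. Qed.

Let a_leq_max : a <= max_entry X.
Proof. by apply: leq_max_entry; rewrite mem_entries a_arm !orbT. Qed.

Let uniq_legX : uniq (legE X).
Proof.
move: hookX; rewrite is_hook_tabE => /and5P[_ _ sL _ _].
by apply: sorted_uniq sL; [apply: ltn_trans | apply: ltnn].
Qed.

Let size_arm_rem : size (rem a (armE X)) = (size (armE X)).-1.
Proof. by rewrite size_rem. Qed.

Let hook_Xa : is_hook_tab Xa.
Proof.
move: hookX; rewrite !is_hook_tabE !mkcellE => /and5P[-> -> -> /allP hA sA] /=.
rewrite (subseq_sorted leq_trans (rem_subseq _ _) sA) andbT.
by apply/allP => y /mem_rem /hA.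
Qed.

Let hook_Xb : is_hook_tab Xb.
Proof.
move: hookX; rewrite !is_hook_tabE !mkcellE => /and5P[-> /allP hL sL /allP hA sA] /=.
rewrite (sorted_filter ltn_trans _ sL) (subseq_sorted leq_trans (rem_subseq _ _) sA).
by rewrite andbT; apply/andP; split; apply/allP => y;
  [rewrite mem_filter => /andP[_ /hL] | move/mem_rem/hA].
Qed.

Let max_Xa : max_entry Xa <= max_entry X.
Proof.
apply/max_entry_leqP => y; rewrite mem_entries !mkcellE => yXa.
by apply: leq_max_entry; move: yXa; rewrite mem_entries => /or3P[-> | -> | /mem_rem ->];
  rewrite ?orbT.
Qed.

Let max_Xb : max_entry Xb <= a.
Proof.
apply/max_entry_leqP => y; rewrite mem_entries !mkcellE mem_filter.
case/or3P => [/eqP-> // | /andP[+ yL] | /mem_rem /leq_seqmax //].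
by rewrite (leq_seqmax yL) andbT -leqNgt.
Qed.

Let min_Xa : min_entry X <= min_entry Xa.
Proof. by rewrite !min_entry_hook. Qed.

Let min_Xb : min_entry X <= min_entry Xb.
Proof. by rewrite !min_entry_hook. Qed.

Let west_leq_a k : k \in domf T -> k != (r, c) -> k.1 <= r -> k.2 <= c ->
  max_entry (getc T k) <= a.
Proof.
move=> kT kp k1 k2; apply: leq_trans (HVT_leq_northeast hT kT pT kp k1 k2) _.
by rewrite min_entry_hook.
Qed.

Let arm_excess_bump X' q Y' : q != (r, c) -> size (armE X') = (size (armE X)).-1 ->
  arm_excess T.[(r, c) <- X'].[q <- Y'] + size (armE (getc T q)) + 1 =
  arm_excess T + size (armE Y').
Proof.
move=> qp szX'; have := arm_excess_set T (r, c) X'.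
have := arm_excess_set T.[(r, c) <- X'] q Y'; rewrite getc_set (negPf qp) szX'.
have : 0 < size (armE X) by rewrite lt0n size_eq0.
lia.
Qed.

Let getc_new q : q \notin domf T -> getc T q = mkcell 0 [::] [::].
Proof. by move=> qT; rewrite /getc not_fnd. Qed.

Let target_row_leq rt kk : (rt, c.+1) \in domf T ->
  kk \in entries (getc T (rt, c.+1)) -> col_entries_geq_lb T c.+1 a kk -> rt <= r.
Proof.
move=> qT kkY kmin; rewrite leqNgt; apply/negP => rlt.
have rc1T : (r, c.+1) \in domf T.
  by apply: (young_below youngT qT); rewrite (young_pos youngT pT).1 ltnW.
set Z := getc T (r, c.+1).
have a_hookZ : a <= hookE Z.
  by rewrite -min_entry_hook ?hookT //; apply: leq_trans a_leq_max (rowsT pT rc1T _ _).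
have := colsT rc1T qT erefl rlt; rewrite ltnNge => /negP; apply.
apply: leq_trans (min_entry_leq kkY) (leq_trans (kmin _ _ rc1T erefl (hook_entry Z) a_hookZ) _).
exact/leq_max_entry/hook_entry.
Qed.

Let below_target_lt rt kk : (rt, c.+1) \in domf T ->
  kk \in entries (getc T (rt, c.+1)) -> col_entries_geq_lb T c.+1 a kk ->
  forall k, k \in domf T -> k.2 = c.+1 -> k.1 < rt -> max_entry (getc T k) < a.
Proof.
move=> qT kkY kmin k kT kc kr; rewrite ltnNge; apply/negP => amax.
have := colsT kT qT kc kr; rewrite ltnNge => /negP; apply.
by apply: leq_trans (min_entry_leq kkY) (kmin _ _ kT kc (max_entry_mem _) amax).
Qed.

Let bump_into_cell X' q Y' : q \in domf T -> q.2 = c.+1 ->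
  size (armE X') = (size (armE X)).-1 ->
  size (armE Y') = (size (armE (getc T q))).+1 ->
  let T' := T.[(r, c) <- X'].[q <- Y'] in
  [/\ domf T' = domf T, arm_excess T' = arm_excess T & c < arm_col T'].
Proof.
move=> qT qc szX' szY' T'; have qp : q != (r, c) by apply/eqP => qp; move: qc; rewrite qp => /n_Sn.
split; first by rewrite !dom_setf (mem_fset1U pT) (mem_fset1U qT).
  by move: (arm_excess_bump Y' qp szX'); rewrite szY' addn1 addnS => /succn_inj /addIn.
rewrite -ltnS -qc; apply: leq_arm_col; first by rewrite dom_setf in_fset1U eqxx.
by rewrite getc_set eqxx -size_eq0 szY'.
Qed.

Let bump_into_new_cell X' q Y' : q \notin domf T ->
  size (armE X') = (size (armE X)).-1 -> armE Y' = [::] ->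
  let T' := T.[(r, c) <- X'].[q <- Y'] in
  domf T' != domf T /\ arm_excess T' = (arm_excess T).-1.
Proof.
move=> qT szX' Y'0 T'; have qp : q != (r, c) by apply: contraNneq qT => ->.
split; first by apply: contraNneq qT => <-; rewrite dom_setf in_fset1U eqxx.
by move: (arm_excess_bump Y' qp szX'); rewrite getc_new // Y'0 !addn0 addn1 => <-.
Qed.

Let target_row_new_leq rt : col_entries_lt T c.+1 a -> first_free_row T c.+1 rt ->
  rt <= r.
Proof.
move=> none [rt0 top _]; rewrite leqNgt; apply/negP => rlt.
have r0 := (young_pos youngT pT).1.
have rc1T : (r, c.+1) \in domf T.
  case/orP: top => [/eqP rt1 | ]; first by move: rlt; rewrite rt1 ltnS leqNgt r0.
  by move/(young_below youngT); apply; rewrite r0 -ltnS prednK.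
have := none _ _ rc1T erefl (hook_entry _); rewrite ltnNge => /negP; apply.
rewrite -min_entry_hook ?hookT //; exact: leq_trans a_leq_max (rowsT pT rc1T _ _).
Qed.

Lemma bump_other_row rt kk : (rt, c.+1) \in domf T ->
  kk \in entries (getc T (rt, c.+1)) -> a <= kk -> col_entries_geq_lb T c.+1 a kk ->
  rt != r ->
  bump_step T T.[(r, c) <- Xa].[(rt, c.+1) <- place_and_bump (getc T (rt, c.+1)) kk a] c.
Proof.
move=> qT kkY akk kmin rtr; set Y := getc T (rt, c.+1).
have [hY' hookY' maxY' armY'] :=
  place_and_bump_spec (hookT qT) kkY a_pos akk (fun y => kmin _ y qT erefl).
have rlt : rt < r by rewrite ltn_neqAle rtr (target_row_leq qT kkY kmin).
have minY' : min_entry (place_and_bump Y kk a) =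
             if hookE Y == kk then a else min_entry Y.
  by rewrite min_entry_hook // hookY' min_entry_hook ?hookT.
split; last by left; apply: bump_into_cell.
apply: (HVT_set2 (q := (rt, c.+1)) hT pT (ltnSn c) hook_Xa min_Xa max_Xa hY').
- by rewrite mem_fset1U.
- move=> k kT kp /= k1 k2; rewrite minY'; case: ifP => _; last exact: rowsT.
  by apply: west_leq_a; rewrite // ?k1 1?ltnW.
- by move=> k kT /= k1 k2; apply: leq_trans maxY' (rowsT qT kT (esym k1) k2).
- move=> k kT /= k2 k1; rewrite minY'; case: ifP => _; last exact: colsT.
  exact: below_target_lt qT kkY kmin k kT k2 k1.
- by move=> k kT /= k2 k1; apply: leq_ltn_trans maxY' (colsT qT kT (esym k2) k1).
- by move=> /= rrt; rewrite rrt eqxx in rtr.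
Qed.

Lemma bump_new_other_row rt : col_entries_lt T c.+1 a -> first_free_row T c.+1 rt ->
  rt != r -> bump_step T T.[(r, c) <- Xa].[(rt, c.+1) <- mkcell a [::] [::]] c.
Proof.
move=> none free rtr; have [rt0 top rows] := free.
have qT : (rt, c.+1) \notin domf T by apply/negP => /rows /(_ erefl); rewrite ltnn.
have rlt : rt < r by rewrite ltn_neqAle rtr (target_row_new_leq none free).
have hY' : is_hook_tab (mkcell a [::] [::]) by rewrite is_hook_tabE !mkcellE a_pos.
have minY' : min_entry (mkcell a [::] [::]) = a by [].
have maxY' : max_entry (mkcell a [::] [::]) = a by rewrite /max_entry /= maxn0.
split; last by right; apply: bump_into_new_cell.
apply: (HVT_set2 (q := (rt, c.+1)) hT pT (ltnSn c) hook_Xa min_Xa max_Xa hY').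
- apply: young_fset1U => //=; apply/orP; right.
  by apply: (young_below youngT pT); rewrite rt0 ltnW.
- by move=> k kT kp /= k1 k2; rewrite minY'; apply: west_leq_a; rewrite // ?k1 1?ltnW.
- move=> [k1 k2] kT /= e lt; rewrite e in kT; case/negP: qT.
  exact: (young_left (c' := c.+1) youngT kT (ltnW lt)).
- by move=> k kT /= k2 _; rewrite minY'; exact: none _ _ kT k2 (max_entry_mem _).
- by move=> k kT /= k2; rewrite ltnNge ltnW ?rows.
- by move=> /= rrt; rewrite rrt eqxx in rtr.
Qed.

Lemma bump_same_row_new : col_entries_lt T c.+1 a -> first_free_row T c.+1 r ->
  bump_step T T.[(r, c) <- Xb].[(r, c.+1) <- mkcell a (sort leq moved) [::]] c.
Proof.
move=> none [_ top rows].
have qT : (r, c.+1) \notin domf T by apply/negP => /rows /(_ erefl); rewrite ltnn.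
have hY' : is_hook_tab (mkcell a (sort leq moved) [::]).
  rewrite is_hook_tabE !mkcellE a_pos /= andbT; apply/andP; split.
    by apply/allP => y; rewrite mem_sort mem_filter => /andP[/andP[]].
  exact/sorted_ltn_sort/filter_uniq.
have minY' : min_entry (mkcell a (sort leq moved) [::]) = a by rewrite min_entry_hook.
split; last by right; apply: bump_into_new_cell.
apply: (HVT_set2 (q := (r, c.+1)) hT pT (ltnSn c) hook_Xb min_Xb
          (leq_trans max_Xb a_leq_max) hY').
- by apply: young_fset1U; rewrite //= ?pT ?orbT ?(young_pos youngT pT).1.
- by move=> k kT kp /= k1 k2; rewrite minY'; apply: west_leq_a; rewrite // ?k1.
- move=> [k1 k2] kT /= e lt; rewrite e in kT; case/negP: qT.
  exact: (young_left (c' := c.+1) youngT kT (ltnW lt)).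
- by move=> k kT /= k2 _; rewrite minY'; exact: none _ _ kT k2 (max_entry_mem _).
- by move=> k kT /= k2; rewrite ltnNge ltnW ?rows.
- by rewrite minY'.
Qed.

Let merged_cell_spec kk : (r, c.+1) \in domf T ->
  kk \in entries (getc T (r, c.+1)) -> a <= kk -> col_entries_geq_lb T c.+1 a kk ->
  let Y := getc T (r, c.+1) in
  let Y' := mkcell a (sort leq (legE Y ++ moved)) (sort leq (kk :: armE Y)) in
  [/\ is_hook_tab Y', min_entry Y' = a & max_entry Y' <= max_entry Y].
Proof.
move=> qT kkY akk kmin Y Y'.
have hY : is_hook_tab Y := hookT qT; have maxX_hookY : max_entry X <= hookE Y.
  by rewrite -(min_entry_hook hY); apply: rowsT pT qT _ _.
have kkE : kk = hookE Y.
  apply/eqP; rewrite eqn_leq (kmin _ _ qT erefl (hook_entry Y)) /=; last first.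
    exact: leq_trans a_leq_max maxX_hookY.
  exact: hook_leq_entry hY kkY.
have moved_max y : y \in moved -> y <= max_entry X.
  by rewrite mem_filter => /andP[_ yL]; apply: leq_max_entry; rewrite mem_entries yL orbT.
move: (hY); rewrite is_hook_tabE => /and5P[_ /allP hL sL /allP hA _].
have hY' : is_hook_tab Y'.
  rewrite is_hook_tabE !mkcellE a_pos sort_sorted ?andbT /=; last exact: leq_total.
  apply/and3P; split.
  - apply/allP => y; rewrite mem_sort mem_cat => /orP[/hL | ]; last first.
      by rewrite mem_filter => /andP[/andP[]].
    by apply: leq_ltn_trans; rewrite -kkE.
  - apply: sorted_ltn_sort; rewrite cat_uniq filter_uniq // andbT.
    rewrite (sorted_uniq ltn_trans ltnn sL) /=; apply/hasPn => y /moved_max yX.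
    by apply/negP => /hL /(leq_ltn_trans (leq_trans yX maxX_hookY)); rewrite ltnn.
  - apply/allP => y; rewrite mem_sort inE => /orP[/eqP-> // | /hA].
    by apply: leq_trans; rewrite -kkE.
split; rewrite ?min_entry_hook //.
have kkmax : kk <= max_entry Y by apply: leq_max_entry.
apply/max_entry_leqP => y; rewrite mem_entries !mkcellE !mem_sort mem_cat inE.
case/or4P => [/eqP-> | /orP[yL | /moved_max yX] | /eqP-> // | yA].
- exact: leq_trans akk kkmax.
- by apply: leq_max_entry; rewrite mem_entries yL orbT.
- by apply: leq_trans yX (leq_trans maxX_hookY (leq_max_entry (hook_entry Y))).
- by apply: leq_max_entry; rewrite mem_entries yA !orbT.
Qed.

Lemma bump_same_row kk : (r, c.+1) \in domf T ->
  kk \in entries (getc T (r, c.+1)) -> a <= kk -> col_entries_geq_lb T c.+1 a kk ->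
  let Y := getc T (r, c.+1) in
  bump_step T T.[(r, c) <- Xb]
    .[(r, c.+1) <- mkcell a (sort leq (legE Y ++ moved)) (sort leq (kk :: armE Y))] c.
Proof.
move=> qT kkY akk kmin Y; have [hY' minY' maxY'] := merged_cell_spec qT kkY akk kmin.
split; last by left; apply: bump_into_cell; rewrite //= size_sort.
apply: (HVT_set2 (q := (r, c.+1)) hT pT (ltnSn c) hook_Xb min_Xb
          (leq_trans max_Xb a_leq_max) hY').
- by rewrite mem_fset1U.
- by move=> k kT kp /= k1 k2; rewrite minY'; apply: west_leq_a; rewrite // ?k1.
- by move=> k kT /= k1 k2; apply: leq_trans maxY' (rowsT qT kT (esym k1) k2).
- by move=> k kT /= k2 k1; rewrite minY'; apply: below_target_lt qT kkY kmin k kT k2 k1.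
- by move=> k kT /= k2 k1; apply: leq_ltn_trans maxY' (colsT qT kT (esym k2) k1).
- by rewrite minY'.
Qed.

End Bump.

Lemma argmax_mem (K : eqType) (f : K -> nat) s k : argmax f s = Some k -> k \in s.
Proof.
elim: s k => //= x s IH k; case E: (argmax f s) => [k'|] /=; last by case=> <-; apply: mem_head.
by case: ifP => _ [<-]; rewrite inE ?eqxx // (IH _ E) orbT.
Qed.

Lemma argmax_None (K : Type) (f : K -> nat) s : argmax f s = None -> s = [::].
Proof. by case: s => //= x s; case: (argmax f s) => // k; case: ifP. Qed.

Lemma arm_col_selected T : 0 < arm_excess T ->
  [seq k <- armkeys T | k.2 == arm_col T] != [::].
Proof.
move=> ae; have /hasP[k kT kA] : has (fun k => armE (getc T k) != [::]) (keys T).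
  move: ae; rewrite lt0n /arm_excess sum_nat_seq_eq0; apply: contraNT => /hasPn h.
  by apply/allP => k /h; rewrite negbK size_eq0.
have kA' : k \in armkeys T by rewrite mem_filter kA.
have /(bigmax_seq_mem (fun k => k.2)) : armkeys T != [::] by apply: contraTneq kA' => ->.
case/mapP => k' k'A k'c; rewrite -has_filter; apply/hasP; exists k' => //=.
by rewrite /arm_col k'c.
Qed.

Lemma Vb_bump_step T : is_HVT T -> 0 < arm_excess T -> bump_step T (Vb T) (arm_col T).
Proof.
move=> hT /arm_col_selected sel.
case E: (argmax (fun k => seqmax (armE (getc T k)))
                [seq k <- armkeys T | k.2 == arm_col T]) => [[r c]|]; last first.
  by rewrite (argmax_None E) in sel.
have := argmax_mem E; rewrite !mem_filter /= => /andP[/eqP ec /andP[armX rcT]].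
rewrite /Vb; cbv zeta; rewrite E -/(col_keys T c.+1) -ec.
set a := seqmax (armE (getc T (r, c))); rewrite -/(col_entries_geq T c.+1 a).
case Eb: (col_entries_geq T c.+1 a) => [|b bs] /=.
  have none := col_entries_geq_nil Eb; have free := first_free_row_max T c.+1.
  case: eqVneq => [rtr | rtr] /=; last exact: bump_new_other_row.
  by rewrite rtr in free; apply: bump_same_row_new.
have [akk kmin [k kcol kkY]] := seqmin_col_entries_geq Eb.
set kk := seqmin (b :: bs).
case Ef: [seq k <- col_keys T c.+1 | kk \in entries (getc T k)] => [|[rt c'] ks] /=.
  by have : k \in [::] by rewrite -Ef mem_filter kkY kcol.
have : (rt, c') \in [seq k <- col_keys T c.+1 | kk \in entries (getc T k)].
  by rewrite Ef mem_head.
rewrite mem_filter mem_col_keys /= => /andP[kkY' /andP[qT /eqP c'c]]; subst c'.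
case: eqVneq => [rtr | rtr] /=; last exact: bump_other_row.
by subst rt; apply: bump_same_row.
Qed.

Lemma bump_step_neq T T' : bump_step T T' (arm_col T) -> T' != T.
Proof.
case=> _ [[_ _ lt] | [neq _]]; apply/eqP => eqT.
  by rewrite eqT ltnn in lt.
by rewrite eqT eqxx in neq.
Qed.

Definition width (T : tab) : nat := \max_(k <- keys T) k.2.

Lemma arm_col_leq_width T : arm_col T <= width T.
Proof.
apply/bigmax_leqP_seq => k; rewrite mem_filter => /andP[_ kT] _.
exact: (@leq_bigmax_seq _ _ xpredT (fun k => k.2)).
Qed.

Lemma V_stop_S T d : 0 < d -> V_stop T d.+1 = V_stop (Vb T) d.
Proof. by case: d => // d _; rewrite /V_stop /= -iterSr. Qed.

Lemma width_domf T T' : domf T' = domf T -> width T' = width T.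
Proof. by rewrite /width /keys => ->. Qed.

Lemma V_stop_exists n T : is_HVT T -> 0 < arm_excess T ->
  width T - arm_col T <= n -> exists2 d, 0 < d & V_stop T d.
Proof.
elim: n T => [|n IH] T hT ae bound;
  have [hV [[dom ae' lt] | [dom _]]] := Vb_bump_step hT ae.
- have := leq_trans lt (arm_col_leq_width _).
  by rewrite (width_domf dom) ltnNge -subn_eq0 -leqn0 bound.
- by exists 1; rewrite /V_stop /Defs.shape /= ?dom.
- have [d d0 stop] : exists2 d, 0 < d & V_stop (Vb T) d.
    by apply: IH; rewrite ?ae' // (width_domf dom); move: bound lt; lia.
  by exists d.+1; rewrite ?V_stop_S.
- by exists 1; rewrite /V_stop /Defs.shape /= ?dom.
Qed.

Lemma V_rel_exists T : is_HVT T -> 0 < arm_excess T -> exists U, V_rel T U.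
Proof.
move=> hT ae; have [d d0 stop] := V_stop_exists hT ae (leqnn _).
have exP : exists d, (0 < d) && V_stop T d by exists d; rewrite d0 stop.
case: (ex_minnP exP) => m /andP[m0 mstop] mmin.
exists (iter m Vb T), m; split=> // d' /andP[d'0 d'm]; apply/negP => stop'.
by have := mmin d'; rewrite d'0 stop' leqNgt d'm => /(_ isT).
Qed.

Lemma V_rel_spec T U : is_HVT T -> 0 < arm_excess T -> V_rel T U ->
  is_HVT U /\ arm_excess U = (arm_excess T).-1.
Proof.
move=> hT ae [d [d0 stop before ->]].
have inv j : j < d -> [/\ is_HVT (iter j Vb T),
    arm_excess (iter j Vb T) = arm_excess T & domf (iter j Vb T) = domf T].
  elim: j => [|j IH] lt //; have [hj aej domj] := IH (ltnW lt).
  have := before j.+1 lt; rewrite /V_stop /Defs.shape /= negb_or => /andP[/negPn/eqP same _].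
  have aej0 : 0 < arm_excess (iter j Vb T) by rewrite aej.
  have [hV [[_ ae' _] | [dom _]]] := Vb_bump_step hj aej0.
    by rewrite ae' aej same domj.
  by rewrite same eqxx in dom.
case: d d0 stop {before} inv => // j _ stop inv; have [hj aej domj] := inv j (ltnSn j).
have aej0 : 0 < arm_excess (iter j Vb T) by rewrite aej.
have step := Vb_bump_step hj aej0.
have [hV [[dom _ _] | [_ ae']]] := step; last by rewrite iterS ae' aej.
by move: stop; rewrite /V_stop /Defs.shape /= dom eqxx (negPf (bump_step_neq step)).
Qed.

Lemma uncrowd_chain_exists T n : is_HVT T -> n <= arm_excess T ->
  exists s : seq tab,
    [/\ size s = n.+1, nth T s 0 = T,
        forall i, 0 < i <= n -> V_rel (nth T s i.-1) (nth T s i) &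
        is_HVT (nth T s n) /\ arm_excess (nth T s n) = arm_excess T - n].
Proof.
move=> hT; elim: n => [|n IH] lt.
  by exists [:: T]; split=> //; [case=> [|[]] | rewrite subn0].
have [s [ss s0 sV [hs aes]]] := IH (ltnW lt).
have aes0 : 0 < arm_excess (nth T s n) by rewrite aes subn_gt0.
have [U VU] := V_rel_exists hs aes0; have [hU aeU] := V_rel_spec hs aes0 VU.
have nthU i : nth T (rcons s U) i = if i < n.+1 then nth T s i else if i == n.+1 then U else T.
  by rewrite nth_rcons ss.
exists (rcons s U); split; rewrite ?size_rcons ?ss ?nthU ?ltnn ?eqxx //.
  move=> i /andP[i0]; rewrite leq_eqVlt ltnS => /orP[/eqP-> | ilt].
    by rewrite !nthU ltnSn ltnn eqxx.
  by rewrite !nthU !ltnS ilt (leq_trans (leq_pred i) ilt); apply: sV; rewrite i0.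
by split=> //; rewrite aeU aes subnS.
Qed.

Lemma uncrowd_chain_spec T (s : seq tab) i : is_HVT T -> nth T s 0 = T ->
  (forall i, 0 < i <= arm_excess T -> V_rel (nth T s i.-1) (nth T s i)) ->
  i <= arm_excess T -> is_HVT (nth T s i) /\ arm_excess (nth T s i) = arm_excess T - i.
Proof.
move=> hT s0 sV; elim: i => [|i IH] lt; first by rewrite s0 subn0.
have [hs aes] := IH (ltnW lt).
have aes0 : 0 < arm_excess (nth T s i) by rewrite aes subn_gt0.
have [hU aeU] := V_rel_spec hs aes0 (sV i.+1 lt).
by rewrite aeU aes subnS.
Qed.

Theorem corollary3p7 (T : tab) :
  is_HVT T ->
  (exists P, uncrowd_P T P) /\ (forall P, uncrowd_P T P -> is_set_valued P).
Proof.
move=> hT; split.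
  have [s [ss s0 sV _]] := uncrowd_chain_exists hT (leqnn (arm_excess T)).
  by exists (nth T s (arm_excess T)), s.
move=> P [s [_ s0 sV ->]].
have [hP aeP] := uncrowd_chain_spec hT s0 sV (leqnn _).
by rewrite /is_set_valued hP aeP subnn.
Qed.
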